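(* Every $c_0$-octahedral real Banach space is universally octahedral. Moreover, a Banach space $X$ is $c_0$-octahedral if and only if for every finite dimensional subspace $Z\subseteq X$ and every $\varepsilon>0$ there exists a subspace $Y\subseteq X$ isometric to $c_0$ such that $\|z+y\|>(1-\varepsilon)(\|z\|+\|y\|)$ for all $y\in Y$ and $z\in Z$.
   Context: A Banach space $W$ is octahedral if for every finite dimensional subspace $E$ of $W$ and every $\varepsilon>0$ there exists $y\in W$, $\|y\|=1$, with $\|x+\lambda y\|\ge(1-\varepsilon)(\|x\|+|\lambda|)$ for all $x\in E$, $\lambda\in\mathbb R$. A real Banach space $X$ is universally octahedral if the space $L(Y,X)$ of bounded operators from $Y$ to $X$ with the operator norm is octahedral for every non-zero real Banach space $Y$. $X$ is $c_0$-octahedral if for every $x_1,\dots,x_n$ in the unit sphere of $X$ and every $\varepsilon>0$ there exists a subspace $Y\subseteq X$ isometric to $c_0$ such that $\|x_i+y\|>(1-\varepsilon)(1+\|y\|)$ for all $y\in Y$ and $1\le i\le n$. *)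

From HB Require Import structures.
From mathcomp Require Import all_boot all_order all_algebra.
From mathcomp Require Import all_classical all_reals all_analysis.
Set Implicit Arguments. Unset Strict Implicit. Unset Printing Implicit Defensive.
Import Order.TTheory GRing.Theory Num.Theory.
Import numFieldNormedType.Exports.
Local Open Scope classical_set_scope.
Local Open Scope ring_scope.

(* Linear span of a finite family of vectors: finite-dimensional subspaces
   are exactly the spans of finite sequences. *)
Definition span_of (R : realType) (V : lmodType R) (s : seq V) : set V :=
  [set x | exists c : 'I_(size s) -> R, x = \sum_(i < size s) c i *: s`_i].

(* Octahedrality of the normed space (W, N), W a linear subspace of the
   vector space V and N the norm on W. *)
Definition octahedral_on (R : realType) (V : lmodType R) (W : set V)
    (N : V -> R) : Prop :=
  forall s : seq V, (forall i : 'I_(size s), W s`_i) ->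
  forall eps : R, 0 < eps ->
  exists y : V, W y /\ N y = 1 /\
    forall (x : V) (lam : R), span_of s x ->
      (1 - eps) * (N x + `|lam|) <= N (x + lam *: y).

Definition bounded_linear (R : realType) (Y X : normedModType R)
    (T : Y -> X) : Prop :=
  (forall (a : R) (u v : Y), T (a *: u + v) = a *: T u + T v) /\
  exists M : R, forall y : Y, `|T y| <= M * `|y|.

Definition opnorm (R : realType) (Y X : normedModType R) (T : Y -> X) : R :=
  sup [set `|T y| | y in [set y : Y | `|y| <= 1]].

Definition universally_octahedral (R : realType)
    (X : completeNormedModType R) : Prop :=
  forall Y : completeNormedModType R, (exists y : Y, y != 0) ->
    octahedral_on (V := (Y -> X)) (@bounded_linear R Y X) (@opnorm R Y X).

Definition c0seq (R : realType) (u : nat -> R) : Prop := u @ \oo --> (0 : R).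

Definition c0norm (R : realType) (u : nat -> R) : R :=
  sup [set `|u n| | n in [set: nat]].

Definition c0_isometry (R : realType) (X : normedModType R)
    (J : (nat -> R) -> X) : Prop :=
  (forall (a : R) (u v : nat -> R), c0seq u -> c0seq v ->
     J (fun n => a * u n + v n) = a *: J u + J v) /\
  (forall u, c0seq u -> `|J u| = c0norm u).

Definition c0_subspace (R : realType) (X : normedModType R) (Y : set X) : Prop :=
  exists J : (nat -> R) -> X, c0_isometry J /\ Y = J @` (@c0seq R).

Definition c0_octahedral (R : realType) (X : normedModType R) : Prop :=
  forall xs : seq X, (forall i : 'I_(size xs), `|xs`_i| = 1) ->
  forall eps : R, 0 < eps ->
  exists Y : set X, c0_subspace Y /\
    forall y, Y y -> forall i : 'I_(size xs),
      (1 - eps) * (1 + `|y|) < `|xs`_i + y|.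

(* The finite-dimensional-subspace characterization; the trivial pair
   z = y = 0 is excluded (otherwise the strict inequality 0 > 0 fails). *)
Definition c0_fd_condition (R : realType) (X : normedModType R) : Prop :=
  forall zs : seq X, forall eps : R, 0 < eps ->
  exists Y : set X, c0_subspace Y /\
    forall y z, Y y -> span_of zs z -> (z != 0 \/ y != 0) ->
      (1 - eps) * (`|z| + `|y|) < `|z + y|.

From HB Require Import structures.
From mathcomp Require Import all_boot all_order all_algebra.
From mathcomp Require Import all_classical all_reals all_analysis.
From mathcomp Require Import ring lra.
Import Order.TTheory GRing.Theory Num.Theory Num.Def.
Import archimedean.Num.Theory archimedean.Num.Def.
Import numFieldNormedType.Exports.
Local Open Scope classical_set_scope.
Local Open Scope ring_scope.
Set Implicit Arguments. Unset Strict Implicit. Unset Printing Implicit Defensive.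

(* The unit sphere of a finite-dimensional (semi)normed space has finite
   delta-nets (Bolzano-Weierstrass on the coefficients).  Feeding such a net
   to c0-octahedrality gives a copy of c_0 almost l_1-orthogonal to the whole
   finite-dimensional subspace, by approximation and scaling.

   For universal octahedrality, let u_1, ..., u_k be a net of the unit sphere
   of the span of the given operators Y -> X, let y_j be points of the unit
   ball where u_j almost attains its norm, and take J : c_0 -> X almost
   l_1-orthogonal to the vectors u_j y_j.  With Hahn-Banach functionals f_i
   norming a unit vector y_0 and the y_j, the operator
   S y = J (f_0 y, f_1 y, ..., f_k y, 0, 0, ...) has norm one and
   |S y_j| >= |y_j|; evaluating T + lam S at y_j then shows
   |T + lam S| >= (1 - eps) (|T| + |lam|). *)

Lemma interval_finite_net (R : realType) (r eta : R) : 0 < eta ->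
  exists G : seq R, forall a, `|a| <= r -> exists2 g, g \in G & `|a - g| < eta.
Proof.
move=> eta0.
exists [seq - r + i%:R * eta | i <- iota 0 (truncn (2 * r / eta)).+1].
move=> a ar.
have [la ua] : -r <= a /\ a <= r by move: ar; rewrite ler_norml => /andP[].
have q0 : 0 <= (a + r) / eta by apply: divr_ge0; [lra | exact: ltW].
have /andP[lek gtk] := truncn_itv q0.
set k := truncn ((a + r) / eta) in lek gtk.
exists (- r + k%:R * eta).
  apply/mapP; exists k => //; rewrite mem_iota /= add0n ltnS.
  by apply: le_truncn; apply: ler_wpM2r; [rewrite invr_ge0 ltW | lra].
have : k%:R * eta <= a + r by rewrite -ler_pdivlMr.
have : a + r < k.+1%:R * eta by rewrite -ltr_pdivrMr.
rewrite -natr1 mulrDl mul1r => ? ?; rewrite ger0_norm; lra.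
Qed.

Lemma increasing_seq_ge (f : nat -> nat) : increasing_seq f -> forall k, (k <= f k)%N.
Proof.
move=> fincr; elim=> [//|k IH]; apply: leq_ltn_trans IH _.
by rewrite ltnNge -leEnat fincr -ltnNge.
Qed.

Lemma bounded_seq_cvg_subseq (R : realType) (a : nat -> R) (r : R) :
  (forall k, `|a k| <= r) -> exists phi : nat -> nat, exists2 l : R,
    `|l| <= r & (forall k, (k <= phi k)%N) /\
    forall e, 0 < e -> exists K, forall k, (K <= k)%N -> `|a (phi k) - l| < e.
Proof.
move=> ar.
have a_bounded : bounded_fun a.
  exists r; split; first by rewrite num_real.
  by move=> x rx k _; apply: le_trans (ar k) (ltW rx).
have [phi phi_incr /cvg_ex [l al]] := @bolzano_weierstrass R a a_bounded.
have conv e : 0 < e -> exists K, forall k, (K <= k)%N -> `|a (phi k) - l| < e.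
  by move: al => /cvgrPdistC_lt /(_ e) + e0 => /(_ e0) [K _ HK]; exists K => k /HK.
exists phi, l; last by split => //; exact: increasing_seq_ge.
rewrite leNgt; apply/negP => rl.
have [K HK] := conv (`|l| - r) ltac:(lra).
have := HK K (leqnn K); have := ar (phi K); have := lerB_dist l (a (phi K)).
by rewrite distrC; lra.
Qed.

Lemma normrM_lt_of_lt_divD1 (R : realType) (a b e : R) : 0 <= b ->
  `|a| < e / (b + 1) -> `|a| * b < e.
Proof.
move=> b0; rewrite ltr_pdivlMr ?ltr_wpDl //; apply: le_lt_trans.
by rewrite ler_wpM2l // lerDl.
Qed.

Definition seminormed_subspace (R : realType) (V : lmodType R) (W : set V)
    (N : V -> R) : Prop :=
  [/\ W 0, forall x y, W x -> W y -> W (x + y), forall (a : R) x, W x -> W (a *: x),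
      forall (a : R) x, W x -> N (a *: x) = `|a| * N x &
      forall x y, W x -> W y -> N (x + y) <= N x + N y].

Section SeminormedSubspace.
Variables (R : realType) (V : lmodType R) (W : set V) (N : V -> R).
Hypothesis WN : seminormed_subspace W N.

Let W0 : W 0 := let: And5 W0 _ _ _ _ := WN in W0.
Let WD : forall x y, W x -> W y -> W (x + y) := let: And5 _ WD _ _ _ := WN in WD.
Let WZ : forall (a : R) x, W x -> W (a *: x) := let: And5 _ _ WZ _ _ := WN in WZ.
Let NZ : forall (a : R) x, W x -> N (a *: x) = `|a| * N x :=
  let: And5 _ _ _ NZ _ := WN in NZ.
Let ND : forall x y, W x -> W y -> N (x + y) <= N x + N y :=
  let: And5 _ _ _ _ ND := WN in ND.

Lemma subspaceN x : W x -> W (- x).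
Proof. by move=> Wx; rewrite -scaleN1r; apply: WZ. Qed.

Lemma subspaceB x y : W x -> W y -> W (x - y).
Proof. by move=> Wx Wy; apply/WD/subspaceN. Qed.

Lemma seminorm0 : N 0 = 0.
Proof. by rewrite -(scale0r 0) NZ // normr0 mul0r. Qed.

Lemma seminormN x : W x -> N (- x) = N x.
Proof. by move=> Wx; rewrite -scaleN1r NZ // normrN normr1 mul1r. Qed.

Lemma seminorm_ge0 x : W x -> 0 <= N x.
Proof.
move=> Wx; have := ND Wx (subspaceN Wx); rewrite subrr seminorm0 seminormN //.
by move=> h; rewrite -(pmulr_lge0 _ (ltr0n R 2)); lra.
Qed.

Lemma seminorm_distC x y : W x -> W y -> N (x - y) = N (y - x).
Proof. by move=> Wx Wy; rewrite -seminormN ?opprB //; apply: subspaceB. Qed.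

Lemma seminorm_dist_triangle x y z : W x -> W y -> W z ->
  N (x - z) <= N (x - y) + N (y - z).
Proof.
move=> Wx Wy Wz; have -> : x - z = (x - y) + (y - z) by rewrite addrA subrK.
by apply: ND; apply: subspaceB.
Qed.

Lemma lerB_seminorm x y : W x -> W y -> N x - N y <= N (x - y).
Proof. by move=> Wx Wy; have := ND (subspaceB Wx Wy) Wy; rewrite subrK; lra. Qed.

Lemma seminorm_eq_dist0 x y : W x -> W y -> N (x - y) = 0 -> N x = N y.
Proof.
move=> Wx Wy xy0; apply/eqP; rewrite eq_le.
have := lerB_seminorm Wx Wy; have := lerB_seminorm Wy Wx.
by rewrite seminorm_distC // xy0 => ? ?; apply/andP; split; lra.
Qed.

Fixpoint all_in (s : seq V) : Prop :=
  if s is x :: s' then W x /\ all_in s' else True.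

Fixpoint lspan (s : seq V) (z : V) : Prop :=
  if s is x :: s' then exists a w, lspan s' w /\ z = a *: x + w else z = 0.

Fixpoint lbox (s : seq V) (r : R) (z : V) : Prop :=
  if s is x :: s' then exists a w, [/\ `|a| <= r, lbox s' r w & z = a *: x + w]
  else z = 0.

Lemma lspan_in s z : all_in s -> lspan s z -> W z.
Proof.
elim: s z => [|x s IH] z /=; first by move=> _ ->.
by move=> [Wx Ws] [a [w [sw ->]]]; apply: WD; [apply: WZ | apply: IH].
Qed.

Lemma seminorm_consB x a b w w' : W x -> W w -> W w' ->
  N (a *: x + w - (b *: x + w')) <= `|a - b| * N x + N (w - w').
Proof.
move=> Wx Ww Ww'; rewrite opprD addrACA -scalerBl -NZ //.
by apply: ND; [apply: WZ | apply: subspaceB].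
Qed.

Lemma lbox_lspan s r z : lbox s r z -> lspan s z.
Proof.
elim: s z => [|x s IH] z //= [a [w [_ bw ->]]].
by exists a, w; split => //; apply: IH.
Qed.

Lemma lbox_le s r r' z : r <= r' -> lbox s r z -> lbox s r' z.
Proof.
move=> rr'; elim: s z => [|x s IH] z //= [a [w [ar bw ->]]].
by exists a, w; split => //; [exact: le_trans rr' | exact: IH].
Qed.

Lemma lspanZ s (c : R) z : lspan s z -> lspan s (c *: z).
Proof.
elim: s z => [|x s IH] z /=; first by move=> ->; rewrite scaler0.
move=> [a [w [sw ->]]]; exists (c * a), (c *: w); split; first exact: IH.
by rewrite scalerDr scalerA.
Qed.

Lemma lspanD s z z' : lspan s z -> lspan s z' -> lspan s (z + z').
Proof.
elim: s z z' => [|x s IH] z z' /=; first by move=> -> ->; rewrite addr0.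
move=> [a [w [sw ->]]] [a' [w' [sw' ->]]]; exists (a + a'), (w + w').
split; first exact: IH.
by rewrite scalerDl addrACA.
Qed.

Lemma lbox_finite_net s r d : all_in s -> 0 < d ->
  exists L : seq V, (forall p, p \in L -> lspan s p) /\
    forall z, lbox s r z -> exists2 p, p \in L & N (z - p) < d.
Proof.
elim: s d => [|x s IH] d /=.
  move=> _ d0; exists [:: 0]; split; first by move=> p; rewrite inE => /eqP ->.
  by move=> z ->; exists 0; rewrite ?inE // subrr seminorm0.
move=> [Wx Ws] d0.
have [L' [L'span L'net]] := IH (d / 2) Ws ltac:(lra).
have Nx0 := seminorm_ge0 Wx.
have [G Gnet] : exists G : seq R, forall a, `|a| <= r ->
    exists2 g, g \in G & `|a - g| < d / 2 / (N x + 1).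
  by apply: interval_finite_net; apply: divr_gt0; lra.
exists [seq g *: x + p | g <- G, p <- L']; split.
  move=> q /allpairsP [[g p] [_ /= pL ->]].
  by exists g, p; split => //; apply: L'span.
move=> _ [a [w [ar bw ->]]].
have [g gG ag] := Gnet a ar; have [p pL wp] := L'net w bw.
exists (g *: x + p); first exact: allpairs_f.
have Ww := lspan_in Ws (lbox_lspan bw); have Wp := lspan_in Ws (L'span p pL).
apply: le_lt_trans (seminorm_consB _ _ Wx Ww Wp) _.
by have := normrM_lt_of_lt_divD1 Nx0 ag; lra.
Qed.

Lemma lbox_cluster s r (u : nat -> V) : all_in s -> (forall k, lbox s r (u k)) ->
  exists2 v, lbox s r v &
    forall e K, 0 < e -> exists2 k, (K <= k)%N & N (u k - v) < e.
Proof.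
elim: s u => [|x s IH] u /=.
  move=> _ u0; exists 0 => // e K e0.
  by exists K => //; rewrite u0 subrr seminorm0.
move=> [Wx Ws] ubox.
have /choice [au uE] : forall k, exists a,
    `|a| <= r /\ exists2 w, lbox s r w & u k = a *: x + w.
  by move=> k; have [a [w [ar bw ->]]] := ubox k; exists a; split => //; exists w.
have /choice [wu wuE] : forall k, exists w, lbox s r w /\ u k = au k *: x + w.
  by move=> k; have [_ [w bw ->]] := uE k; exists w.
have [phi [l lr [phi_ge cvg_a]]] := bounded_seq_cvg_subseq (fun k => (uE k).1).
have [v bv cluster_w] := IH (wu \o phi) Ws (fun k => (wuE (phi k)).1).
exists (l *: x + v); first by exists l, v.
move=> e K e0.
have Nx0 := seminorm_ge0 Wx.
have [K1 HK1] := cvg_a (e / 2 / (N x + 1)) ltac:(apply: divr_gt0; lra).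
have [k Kk wv] := cluster_w (e / 2) (maxn K K1) ltac:(lra).
exists (phi k); first exact: leq_trans (leq_trans (leq_maxl _ _) Kk) (phi_ge k).
have Ww := lspan_in Ws (lbox_lspan (wuE (phi k)).1).
have Wv := lspan_in Ws (lbox_lspan bv).
rewrite (wuE (phi k)).2; apply: le_lt_trans (seminorm_consB _ _ Wx Ww Wv) _.
have al : `|au (phi k) - l| < e / 2 / (N x + 1).
  by apply: HK1; apply: leq_trans Kk; exact: leq_maxr.
by have := normrM_lt_of_lt_divD1 Nx0 al; move: wv => /=; lra.
Qed.

Definition box_bounded (s : seq V) (M : R) : Prop :=
  forall z, lspan s z -> exists2 z', lbox s (M * N z) z' & N (z - z') = 0.

Lemma box_bounded_cons_dep x s M w : all_in s -> W x -> 0 <= M ->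
  box_bounded s M -> lspan s w -> N (x - w) = 0 -> box_bounded (x :: s) M.
Proof.
move=> Ws Wx M0 sM sw xw0 _ [a [z [sz ->]]].
have Wz := lspan_in Ws sz; have Ww := lspan_in Ws sw.
have Waxz : W (a *: x + z) by apply: WD => //; apply: WZ.
have sv : lspan s (a *: w + z) by apply: lspanD => //; apply: lspanZ.
have Wv := lspan_in Ws sv.
have xzv0 : N (a *: x + z - (a *: w + z)) = 0.
  by rewrite opprD addrACA subrr addr0 -scalerBr NZ ?xw0 ?mulr0 //; apply: subspaceB.
have [v' bv' vv'0] := sM _ sv; have Wv' := lspan_in Ws (lbox_lspan bv').
exists (0 *: x + v').
  exists 0, v'; split => //; last by rewrite (seminorm_eq_dist0 Waxz Wv xzv0).
  by rewrite normr0; apply/mulr_ge0/seminorm_ge0.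
rewrite scale0r add0r; apply/eqP; rewrite eq_le seminorm_ge0 ?andbT //;
  last exact: subspaceB.
by have := seminorm_dist_triangle Waxz Wv Wv'; rewrite xzv0 vv'0; lra.
Qed.

(* A minimizing sequence would have, by [lbox_cluster], a cluster point [v]
   in the span with [N (x - v) = 0]. *)
Lemma dist_lspan_gt0 x s M : all_in s -> W x -> 0 <= M -> box_bounded s M ->
  ~ (exists2 w, lspan s w & N (x - w) = 0) ->
  exists2 d, 0 < d & forall w, lspan s w -> d <= N (x - w).
Proof.
move=> Ws Wx M0 sM xnspan; apply: contrapT => nd.
have /choice [w wE] : forall k : nat, exists w, lspan s w /\ N (x - w) < k.+1%:R^-1.
  move=> k; apply: contrapT => nw; apply: nd; exists k.+1%:R^-1 => [|w sw].
    by rewrite invr_gt0 ltr0n.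
  by rewrite leNgt; apply/negP => xw; apply: nw; exists w.
have Ww k : W (w k) := lspan_in Ws (wE k).1.
have /choice [w' w'E] : forall k, exists w',
    lbox s (M * N (w k)) w' /\ N (w k - w') = 0.
  by move=> k; have [w' ? ?] := sM _ (wE k).1; exists w'.
have Ww' k : W (w' k) := lspan_in Ws (lbox_lspan (w'E k).1).
have Nx0 := seminorm_ge0 Wx.
have w'box k : lbox s (M * (N x + 1)) (w' k).
  apply: lbox_le (w'E k).1; apply: ler_wpM2l => //.
  have := lerB_seminorm (Ww k) Wx; rewrite seminorm_distC //.
  have : k.+1%:R^-1 <= 1 :> R by rewrite invf_le1 ?ler1n ?ltr0n.
  by move=> k1 wk; have := lt_le_trans (wE k).2 k1; lra.
have [v bv cluster_v] := lbox_cluster Ws w'box.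
have Wv := lspan_in Ws (lbox_lspan bv).
apply: xnspan; exists v; first exact: lbox_lspan bv.
apply/eqP; rewrite eq_le seminorm_ge0 ?andbT; last exact: subspaceB.
rewrite leNgt; apply/negP => t0; set t := N (x - v) in t0.
have [k Kk w'v] := cluster_v (t / 2) (truncn (2 / t)) ltac:(lra).
have kt : k.+1%:R^-1 < t / 2 :> R.
  rewrite -[t / 2]invf_div ltf_pV2 ?posrE ?ltr0n //; last exact: divr_gt0.
  by apply: lt_le_trans (truncnS_gt (2 / t)) _; rewrite ler_nat ltnS.
have := seminorm_dist_triangle Wx (Ww k) Wv.
have := seminorm_dist_triangle (Ww k) (Ww' k) Wv.
by have := lt_trans (wE k).2 kt; have := (w'E k).2; rewrite -/t; lra.
Qed.

Lemma box_bounded_cons_indep x s M d : all_in s -> W x -> 0 <= M -> 0 < d ->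
  box_bounded s M -> (forall w, lspan s w -> d <= N (x - w)) ->
  exists2 M', 0 <= M' & box_bounded (x :: s) M'.
Proof.
move=> Ws Wx M0 d0 sM xd; have Nx0 := seminorm_ge0 Wx.
have xd0 : 0 <= N x / d by apply: divr_ge0 => //; exact: ltW.
have dinv0 : 0 <= d^-1 by rewrite invr_ge0 ltW.
exists (d^-1 + M * (1 + N x / d)).
  by apply: addr_ge0 => //; apply: mulr_ge0 => //; apply: addr_ge0.
move=> _ [a [w [sw ->]]]; have Ww := lspan_in Ws sw.
have Wz : W (a *: x + w) by apply: WD => //; apply: WZ.
set z := a *: x + w in Wz *.
have ad : `|a| <= N z / d.
  rewrite ler_pdivlMr //; have [->|a0] := eqVneq a 0.
    by rewrite normr0 mul0r seminorm_ge0.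
  have -> : z = a *: (x - (- a^-1) *: w).
    by rewrite scalerDr scalerN scalerA mulrN mulfV // scaleNr opprK scale1r.
  rewrite NZ; last by apply/subspaceB/WZ.
  by apply: ler_wpM2l => //; apply/xd/lspanZ.
have wz : N w <= N z * (1 + N x / d).
  have -> : w = z - a *: x by rewrite addrC addKr.
  apply: le_trans (ND Wz (subspaceN (WZ a Wx))) _.
  rewrite seminormN ?NZ //; last exact: WZ.
  have : `|a| * N x <= N z / d * N x by apply: ler_wpM2r.
  by rewrite mulrDr mulr1 mulrA; lra.
have [w' bw' ww'0] := sM _ sw.
have Nz0 := seminorm_ge0 Wz.
exists (a *: x + w'); last by rewrite opprD addrACA subrr add0r.
exists a, w'; split => //.
  rewrite mulrDl [_^-1 * _]mulrC; apply: le_trans ad _; rewrite lerDl.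
  by apply: mulr_ge0 => //; apply: mulr_ge0 => //; apply: addr_ge0.
apply: lbox_le bw'; rewrite mulrDl -mulrA [(1 + _) * _]mulrC.
apply: le_trans (_ : M * (N z * (1 + N x / d)) <= _); first exact: ler_wpM2l.
by rewrite lerDr; apply: mulr_ge0.
Qed.

Lemma exists_box_bound s : all_in s -> exists2 M, 0 <= M & box_bounded s M.
Proof.
elim: s => [_|x s IH [Wx Ws]].
  by exists 0 => // z /= ->; exists 0; rewrite // subrr seminorm0.
have [M M0 sM] := IH Ws.
have [[w sw xw0]|xnspan] := pselect (exists2 w, lspan s w & N (x - w) = 0).
  by exists M => //; apply: box_bounded_cons_dep sw xw0.
have [d d0 xd] := dist_lspan_gt0 Ws Wx M0 sM xnspan.
exact: box_bounded_cons_indep Ws Wx M0 d0 sM xd.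
Qed.

Lemma unit_sphere_finite_net s d : all_in s -> 0 < d -> exists us : seq V,
  (forall u, u \in us -> lspan s u /\ N u = 1) /\
  forall z, lspan s z -> N z = 1 -> exists2 u, u \in us & N (z - u) < d.
Proof.
move=> Ws d0.
have [M M0 sM] := exists_box_bound Ws.
pose d' := Num.min d 1 / 2.
have d'0 : 0 < d' by rewrite divr_gt0 // lt_min d0 ltr01.
have d'1 : d' <= 1 / 2 by rewrite ler_pM2r // ge_min lexx orbT.
have d'd : 2 * d' <= d by rewrite mulrC divfK // ge_min lexx.
have [L [Lspan Lnet]] := lbox_finite_net M Ws d'0.
exists [seq (N p)^-1 *: p | p <- L & N p != 0]; split.
  move=> u /mapP [p]; rewrite mem_filter => /andP [Np0 pL] ->.
  have Wp := lspan_in Ws (Lspan p pL).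
  split; first exact/lspanZ/Lspan.
  by rewrite NZ // ger0_norm ?mulVf // invr_ge0 seminorm_ge0.
move=> z sz Nz1.
have [z' bz' zz'0] := sM _ sz; rewrite Nz1 mulr1 in bz'.
have [p pL z'p] := Lnet _ bz'.
have Wz := lspan_in Ws sz; have Wz' := lspan_in Ws (lbox_lspan bz').
have Wp := lspan_in Ws (Lspan _ pL).
have zp : N (z - p) < d' by have := seminorm_dist_triangle Wz Wz' Wp; lra.
have Np0 : 0 < N p by have := lerB_seminorm Wz Wp; lra.
exists ((N p)^-1 *: p).
  by apply/mapP; exists p => //; rewrite mem_filter pL andbT lt0r_neq0.
apply: le_lt_trans (seminorm_dist_triangle Wz Wp (WZ _ Wp)) _.
have -> : p - (N p)^-1 *: p = (1 - (N p)^-1) *: p by rewrite scalerBl scale1r.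
rewrite NZ // -{2}(gtr0_norm Np0) -normrM.
rewrite mulrBl mul1r mulVf ?lt0r_neq0 //.
suff : `|N p - 1| <= N (z - p) by lra.
rewrite ler_norml; have := lerB_seminorm Wz Wp; have := lerB_seminorm Wp Wz.
by rewrite seminorm_distC // => ? ?; apply/andP; split; lra.
Qed.

Lemma octahedral_ineq_scale s y eps : all_in s -> W y -> N y = 1 -> 0 <= eps ->
  (forall x (mu : R), lspan s x -> N x = 1 ->
     (1 - eps) * (1 + `|mu|) <= N (x + mu *: y)) ->
  forall x (lam : R), lspan s x -> (1 - eps) * (N x + `|lam|) <= N (x + lam *: y).
Proof.
move=> Ws Wy Ny eps0 unit_ineq x lam sx.
have Wx := lspan_in Ws sx; have Wxy : W (x + lam *: y) by apply/WD/WZ.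
have [x0|xn0] := eqVneq (N x) 0.
  have := lerB_seminorm (WZ lam Wy) Wxy.
  have -> : lam *: y - (x + lam *: y) = - x by rewrite opprD addrCA subrr addr0.
  rewrite NZ // Ny mulr1 seminormN // x0 add0r.
  by have := normr_ge0 lam; nra.
have x0 : 0 < N x by rewrite lt_def xn0 seminorm_ge0.
set t := N x in x0 *.
have Nx1 : N (t^-1 *: x) = 1 by rewrite NZ // gtr0_norm ?invr_gt0 // mulVf ?gt_eqF.
have := unit_ineq _ (t^-1 * lam) (lspanZ _ sx) Nx1.
rewrite -scalerA -scalerDr NZ // normrM gtr0_norm ?invr_gt0 // => ineq.
have -> : (1 - eps) * (t + `|lam|) = t * ((1 - eps) * (1 + t^-1 * `|lam|)).
  by field; rewrite gt_eqF.
by rewrite -[N _](mulVKf (lt0r_neq0 x0)); apply: ler_wpM2l => //; exact: ltW.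
Qed.
End SeminormedSubspace.

Lemma span_ofE (R : realType) (V : lmodType R) (s : seq V) z :
  span_of s z <-> lspan s z.
Proof.
elim: s z => [|x s IH] z /=.
  split; first by move=> [c ->]; rewrite big_ord0.
  by move=> ->; exists (fun=> 0); rewrite big_ord0.
split.
  move=> [c ->]; rewrite big_ord_recl /=.
  exists (c ord0), (\sum_(i < size s) c (lift ord0 i) *: s`_i); split => //.
  by apply/IH; exists (fun i => c (lift ord0 i)).
move=> [a [w [/IH [c ->] ->]]].
exists (fun i : 'I_(size s).+1 => if unlift ord0 i is Some j then c j else a).
rewrite big_ord_recl /= unlift_none; congr (_ + _).
by apply: eq_bigr => i _; rewrite liftK.
Qed.

Lemma span_ofZ (R : realType) (V : lmodType R) (s : seq V) (c : R) z :
  span_of s z -> span_of s (c *: z).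
Proof. by move=> /span_ofE sz; apply/span_ofE/lspanZ. Qed.

Lemma mem_span_of (R : realType) (V : lmodType R) (s : seq V) x :
  x \in s -> span_of s x.
Proof.
move=> xs; have i_lt : (index x s < size s)%N by rewrite index_mem.
exists (fun j => (j == Ordinal i_lt)%:R).
rewrite (bigD1 (Ordinal i_lt)) //= eqxx scale1r nth_index // big1 ?addr0 //.
by move=> j /negbTE ->; rewrite scale0r.
Qed.

Lemma all_in_nth (R : realType) (V : lmodType R) (W : set V) (s : seq V) :
  (forall i : 'I_(size s), W s`_i) -> all_in W s.
Proof.
elim: s => [//|x s IH] /= Ws; split; first exact: (Ws ord0).
by apply: IH => i; exact: (Ws (lift ord0 i)).
Qed.

Lemma all_in_setT (R : realType) (V : lmodType R) (s : seq V) : all_in setT s.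
Proof. by elim: s. Qed.

Section C0Subspace.
Variables (R : realType) (X : normedModType R) (J : (nat -> R) -> X).
Hypothesis J_iso : c0_isometry J.

Lemma c0seq0 : c0seq (fun=> 0 : R).
Proof. exact: cvg_cst. Qed.

Lemma c0seqZ (a : R) u : c0seq u -> c0seq (fun n => a * u n).
Proof. by move=> u0; rewrite /c0seq -(mulr0 a); apply: cvgM => //; exact: cvg_cst. Qed.

Lemma c0_isometry0 : J (fun=> 0) = 0.
Proof.
have := J_iso.1 1 _ _ c0seq0 c0seq0; rewrite scale1r.
under [fun n => _]funext => n do rewrite mulr0 addr0.
by move/eqP; rewrite -subr_eq subrr eq_sym => /eqP.
Qed.

Lemma c0_isometryZ (a : R) u : c0seq u -> J (fun n => a * u n) = a *: J u.
Proof.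
move=> u0; have := J_iso.1 a _ _ u0 c0seq0; rewrite c0_isometry0 addr0.
by under [fun n => _]funext => n do rewrite addr0.
Qed.

Lemma c0_subspaceZ (a : R) y : (J @` @c0seq R) y -> (J @` @c0seq R) (a *: y).
Proof.
by move=> [u u0 <-]; exists (fun n => a * u n); [exact: c0seqZ | exact: c0_isometryZ].
Qed.

End C0Subspace.

Definition truncation (R : realType) (m : nat) (f : nat -> R) (n : nat) : R :=
  if (n < m)%N then f n else 0.

Lemma c0seq_truncation (R : realType) m (f : nat -> R) : c0seq (truncation m f).
Proof.
apply/cvgrPdistC_lt => e e0; exists m => // n /= mn.
by rewrite /truncation ltnNge mn /= subrr normr0.
Qed.

Section TruncationNorm.
Variables (R : realType) (m : nat) (f : nat -> R) (c : R).
Hypotheses (c0 : 0 <= c) (fc : forall n, (n < m)%N -> `|f n| <= c).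

Lemma truncation_norm_le n : `|truncation m f n| <= c.
Proof. by rewrite /truncation; case: ifP => [/fc //|_]; rewrite normr0. Qed.

Lemma c0norm_truncation_le : c0norm (truncation m f) <= c.
Proof.
apply: ge_sup; first by exists `|truncation m f 0|, 0%N.
by move=> _ [n _ <-]; exact: truncation_norm_le.
Qed.

Lemma ler_c0norm_truncation n : (n < m)%N -> `|f n| <= c0norm (truncation m f).
Proof.
move=> nm; apply: sup_upper_bound.
  split; first by exists `|truncation m f 0|, 0%N.
  by exists c => _ [k _ <-]; exact: truncation_norm_le.
by exists n => //; rewrite /truncation nm.
Qed.

End TruncationNorm.

Section GraphExtension.
Variables (R : realType) (Y : normedModType R).
Implicit Types (G : set (Y * R)).

Definition functional_graph G := forall y a b, G (y, a) -> G (y, b) -> a = b.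
Definition dominated_graph G := forall y a, G (y, a) -> a <= `|y|.
Definition linear_graph G := forall (c : R) y a z b,
  G (y, a) -> G (z, b) -> G (c *: y + z, c * a + b).

Variable G : set (Y * R).
Hypotheses (Gl : linear_graph G) (G0 : G (0, 0)).

Lemma linear_graphZ (c : R) y a : G (y, a) -> G (c *: y, c * a).
Proof. by move=> Gya; have := Gl c Gya G0; rewrite !addr0. Qed.

Lemma linear_graphD y a z b : G (y, a) -> G (z, b) -> G (y + z, a + b).
Proof. by move=> Gya Gzb; have := Gl 1 Gya Gzb; rewrite scale1r mul1r. Qed.

(* The value [c] at the new direction [x] must lie between the lower and
   upper bounds imposed by domination; they are compatible because the
   bounds of two points of [G] combine through the triangle inequality. *)
Lemma exists_extension_value x : dominated_graph G -> exists c : R,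
  forall w a, G (w, a) -> a - `|w - x| <= c /\ c <= `|w + x| - a.
Proof.
move=> Gd; pose S := [set r | exists w a, G (w, a) /\ r = a - `|w - x|].
have S_ub w2 a2 : G (w2, a2) -> ubound S (`|w2 + x| - a2).
  move=> Gwa2 _ [w1 [a1 [Gwa1 ->]]].
  have := Gd _ _ (linear_graphD Gwa1 Gwa2).
  have : `|w1 + w2| <= `|w1 - x| + `|w2 + x|.
    by rewrite -[w1 + w2](addr0 _) -(addNr x) addrACA; exact: ler_normD.
  lra.
have S_sup : has_sup S.
  by split; [exists (0 - `|0 - x|), 0, 0 | exists (`|0 + x| - 0); exact: S_ub G0].
exists (sup S) => w a Gwa; split; last exact: ge_sup S_sup.1 (S_ub _ _ Gwa).
by apply: sup_upper_bound => //; exists w, a.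
Qed.

Definition graph_extension x (c : R) : set (Y * R) :=
  [set p | exists w a t, G (w, a) /\ p = (w + t *: x, a + t * c)].

Lemma sub_graph_extension x c : G `<=` graph_extension x c.
Proof. by move=> [w a] Gwa; exists w, a, 0; rewrite scale0r mul0r !addr0. Qed.

Lemma graph_extension_new x c : graph_extension x c (x, c).
Proof. by exists 0, 0, 1; rewrite scale1r mul1r !add0r. Qed.

Lemma graph_extension_functional x c : functional_graph G ->
  ~ (exists a, G (x, a)) -> functional_graph (graph_extension x c).
Proof.
move=> Gf xG y _ _ [w [a [t [Gwa [-> ->]]]]] [w' [a' [t' [Gwa' [e ->]]]]].
have [tt'|tt'] := eqVneq t t'.
  have ww' : w = w' by move: e; rewrite tt'; exact: addIr.
  by rewrite ww' in Gwa; rewrite (Gf _ _ _ Gwa Gwa') tt'.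
exfalso; apply: xG; exists ((t - t')^-1 * (a' - a)).
have -> : x = (t - t')^-1 *: (w' - w).
  have e2 : (t - t') *: x = w' - w.
    by rewrite scalerBl; apply/eqP; rewrite subr_eq addrAC -e addrC addKr.
  by rewrite -e2 scalerA mulVf ?scale1r // subr_eq0.
apply: linear_graphZ; rewrite addrC [a' - a]addrC.
by apply: linear_graphD => //; have := linear_graphZ (-1) Gwa; rewrite scaleN1r mulN1r.
Qed.

Lemma graph_extension_dominated x c : dominated_graph G ->
  (forall w a, G (w, a) -> a - `|w - x| <= c /\ c <= `|w + x| - a) ->
  dominated_graph (graph_extension x c).
Proof.
move=> Gd cE _ _ [w [a [t [Gwa [-> ->]]]]].
(* Rescaling by [|t|] reduces domination to one of the two bounds on [c]. *)
have [t0|t0|->] := ltgtP t 0; last by rewrite scale0r mul0r !addr0; exact: Gd.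
- have nt0 : 0 < - t by rewrite oppr_gt0.
  have := (cE _ _ (linear_graphZ (- t)^-1 Gwa)).1.
  have -> : (- t)^-1 *: w - x = (- t)^-1 *: (w + t *: x).
    by rewrite scalerDr scalerA invrN mulNr mulVf ?lt_eqF // scaleN1r scaleNr.
  rewrite normrZ gtr0_norm ?invr_gt0 // => h.
  have := ler_wpM2l (ltW nt0) h.
  by rewrite mulrBr !mulrA mulfV ?gt_eqF // !mul1r; lra.
- have := (cE _ _ (linear_graphZ t^-1 Gwa)).2.
  have -> : t^-1 *: w + x = t^-1 *: (w + t *: x).
    by rewrite scalerDr scalerA mulVf ?gt_eqF // scale1r.
  rewrite normrZ gtr0_norm ?invr_gt0 // => h.
  have := ler_wpM2l (ltW t0) h.
  by rewrite mulrBr !mulrA mulfV ?gt_eqF // !mul1r; lra.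
Qed.

Lemma graph_extension_linear x c : linear_graph (graph_extension x c).
Proof.
move=> k _ _ _ _ [w [a [t [Gwa [-> ->]]]]] [w' [a' [t' [Gwa' [-> ->]]]]].
exists (k *: w + w'), (k * a + a'), (k * t + t'); split; first exact: Gl.
congr (_, _).
  by rewrite scalerDr scalerA scalerDl addrACA.
by rewrite mulrDr mulrA mulrDl addrACA.
Qed.

End GraphExtension.

Section HahnBanach.
Variables (R : realType) (Y : normedModType R) (y0 : Y).

(* Graphs of norm-dominated partial linear functionals through (y0, |y0|);
   the empty set is admitted so that the union of the empty chain qualifies
   for Zorn's lemma. *)
Definition norming_graph (G : set (Y * R)) : Prop :=
  [/\ functional_graph G, dominated_graph G, linear_graph G &
      G = set0 \/ G (y0, `|y0|)].

Lemma norming_graph_bigcup (F : set (set (Y * R))) :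
  F `<=` norming_graph -> total_on F subset -> norming_graph (\bigcup_(G in F) G).
Proof.
move=> FP tot; split.
- move=> y a b [G1 F1 h1] [G2 F2 h2].
  have [s12|s21] := tot _ _ F1 F2.
    by have [f _ _ _] := FP _ F2; apply: (f y); [apply: s12|].
  by have [f _ _ _] := FP _ F1; apply: (f y); [|apply: s21].
- by move=> y a [G1 F1 h1]; have [_ d _ _] := FP _ F1; apply: d.
- move=> c y a z b [G1 F1 h1] [G2 F2 h2].
  have [s12|s21] := tot _ _ F1 F2.
    by have [_ _ l _] := FP _ F2; exists G2 => //; apply: l => //; apply: s12.
  by have [_ _ l _] := FP _ F1; exists G1 => //; apply: l => //; apply: s21.
- have [[G FG Gy]|nG] := pselect (exists2 G, F G & G (y0, `|y0|)).
    by right; exists G.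
  left; apply/seteqP; split => // p [G FG Gp].
  have [_ _ _ [G0|Gy]] := FP _ FG; first by rewrite G0 in Gp.
  by exfalso; apply: nG; exists G.
Qed.

Lemma norming_graph_line :
  norming_graph [set p | exists t : R, p = (t *: y0, t * `|y0|)].
Proof.
split.
- move=> y a b [t [-> ->]] [t' [e ->]].
  have [->|y00] := eqVneq y0 0; first by rewrite normr0 !mulr0.
  move/eqP: e; rewrite -subr_eq0 -scalerBl scaler_eq0 (negbTE y00) orbF subr_eq0.
  by move/eqP ->.
- by move=> y a [t [-> ->]]; rewrite normrZ ler_wpM2r // ler_norm.
- move=> c y a z b [t [-> ->]] [t' [-> ->]]; exists (c * t + t').
  by rewrite scalerDl scalerA mulrDl mulrA.
- by right; exists 1; rewrite scale1r mul1r.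
Qed.

Lemma exists_norming_functional : exists g : Y -> R,
  [/\ forall (a : R) u v, g (a *: u + v) = a * g u + g v,
      forall y, `|g y| <= `|y| & g y0 = `|y0|].
Proof.
have [G [[Gf Gd Gl Gy] Gmax]] := Zorn_bigcup norming_graph_bigcup.
have Gy0 : G (y0, `|y0|).
  case: Gy => // G0; exfalso; apply: (Gmax _ _ norming_graph_line); rewrite G0.
  split => // /(_ (y0, `|y0|)); apply.
  by exists 1; rewrite scale1r mul1r.
have G0 : G (0, 0) by have := Gl (-1) _ _ _ _ Gy0 Gy0; rewrite scaleN1r mulN1r !addNr.
have /choice [g gG] : forall x, exists a, G (x, a).
  move=> x; apply: contrapT => xG.
  have [c cE] := exists_extension_value Gl G0 x Gd.
  apply: (Gmax (graph_extension G x c)).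
    split; first exact: sub_graph_extension.
    by move=> /(_ _ (graph_extension_new G0 x c)) Gxc; apply: xG; exists c.
  split; [exact: graph_extension_functional | exact: graph_extension_dominated |
          exact: graph_extension_linear | right; exact: sub_graph_extension].
have gE y a : G (y, a) -> g y = a by move=> Gya; apply: (Gf y).
have glin (a : R) u v : g (a *: u + v) = a * g u + g v by apply/gE/Gl.
have gN y : g (- y) = - g y.
  by have := glin (-1) y 0; rewrite scaleN1r addr0 mulN1r (gE _ _ G0) addr0.
have g_le y : g y <= `|y| by apply: Gd; exact: gG.
exists g; split => //; last exact: gE.
by move=> y; rewrite ler_norml g_le andbT lerNl -gN -normrN g_le.
Qed.

End HahnBanach.

Section OperatorNorm.
Variables (R : realType) (Y X : normedModType R).
Implicit Types (T : Y -> X).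

Lemma bounded_linear0 T : bounded_linear T -> T 0 = 0.
Proof.
move=> [T_lin _]; have := T_lin 1 0 0; rewrite !scale1r addr0.
by move/eqP; rewrite -subr_eq subrr eq_sym => /eqP.
Qed.

Lemma bounded_linearZ T (a : R) y : bounded_linear T -> T (a *: y) = a *: T y.
Proof. by move=> T_bl; have := T_bl.1 a y 0; rewrite bounded_linear0 // !addr0. Qed.

Lemma bounded_linear_cst0 : bounded_linear (0 : Y -> X).
Proof.
split; first by move=> a u v /=; rewrite scaler0 addr0.
by exists 0 => y /=; rewrite normr0 mul0r.
Qed.

Lemma opnorm_has_sup T : bounded_linear T ->
  has_sup [set `|T y| | y in [set y : Y | `|y| <= 1]].
Proof.
move=> [_ [M TM]]; split; first by exists `|T 0|, 0 => //=; rewrite normr0.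
exists `|M| => _ [y /= y1 <-]; apply: le_trans (TM y) _.
apply: le_trans (ler_norm _) _; rewrite normrM normr_id.
by rewrite -[leRHS]mulr1 ler_wpM2l.
Qed.

Lemma ler_opnorm T y : bounded_linear T -> `|y| <= 1 -> `|T y| <= opnorm T.
Proof. by move=> T_bl y1; apply: sup_upper_bound; [exact: opnorm_has_sup | exists y]. Qed.

Lemma opnorm_le T c : bounded_linear T ->
  (forall y, `|y| <= 1 -> `|T y| <= c) -> opnorm T <= c.
Proof.
move=> T_bl Tc; apply: ge_sup; first by exists `|T 0|, 0 => //=; rewrite normr0.
by move=> _ [y /= y1 <-]; apply: Tc.
Qed.

Lemma opnorm_ge0 T : bounded_linear T -> 0 <= opnorm T.
Proof.
move=> T_bl; have := ler_opnorm (y := 0) T_bl; rewrite normr0 ler01.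
by move=> /(_ isT); exact: le_trans.
Qed.

Lemma opnorm_bound T y : bounded_linear T -> `|T y| <= opnorm T * `|y|.
Proof.
move=> T_bl; have [->|y0] := eqVneq y 0.
  by rewrite bounded_linear0 // !normr0 mulr0.
have ny : 0 < `|y| by rewrite normr_gt0.
have := ler_opnorm (y := `|y|^-1 *: y) T_bl.
rewrite normrZ bounded_linearZ // normrZ gtr0_norm ?invr_gt0 // mulVf ?gt_eqF //.
by move=> /(_ (lexx _)); rewrite -ler_pdivrMr // mulrC.
Qed.

Lemma opnorm_sup_adherent T d : bounded_linear T -> 0 < d ->
  exists2 y, `|y| <= 1 & opnorm T - d < `|T y|.
Proof.
move=> T_bl d0; have [_ [y /= y1 <-] Ty] := sup_adherent d0 (opnorm_has_sup T_bl).
by exists y.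
Qed.

Lemma bounded_linear_add T T' : bounded_linear T -> bounded_linear T' ->
  bounded_linear (T + T').
Proof.
move=> T_bl T'_bl; split => [a u v|].
  change (T (a *: u + v) + T' (a *: u + v) = a *: (T u + T' u) + (T v + T' v)).
  by rewrite T_bl.1 T'_bl.1 scalerDr addrACA.
exists (opnorm T + opnorm T') => y.
change (`|T y + T' y| <= (opnorm T + opnorm T') * `|y|).
apply: le_trans (ler_normD _ _) _.
by rewrite mulrDl; apply: lerD; apply: opnorm_bound.
Qed.

Lemma bounded_linear_scale (a : R) T : bounded_linear T -> bounded_linear (a *: T).
Proof.
move=> T_bl; split => [b u v|].
  change (a *: T (b *: u + v) = b *: (a *: T u) + a *: T v).
  by rewrite T_bl.1 scalerDr !scalerA mulrC.
exists (`|a| * opnorm T) => y.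
change (`|a *: T y| <= `|a| * opnorm T * `|y|); rewrite normrZ -mulrA.
by apply: ler_wpM2l => //; apply: opnorm_bound.
Qed.

Lemma opnormZ (a : R) T : bounded_linear T -> opnorm (a *: T) = `|a| * opnorm T.
Proof.
move=> T_bl; have aT_bl := bounded_linear_scale a T_bl.
apply/eqP; rewrite eq_le; apply/andP; split.
  apply: opnorm_le => // y y1; change (`|a *: T y| <= `|a| * opnorm T).
  by rewrite normrZ ler_wpM2l // ler_opnorm.
have [->|a0] := eqVneq a 0.
  by rewrite normr0 mul0r; apply/opnorm_ge0/bounded_linear_scale.
rewrite mulrC -ler_pdivlMr ?normr_gt0 //.
apply: opnorm_le => // y y1; rewrite ler_pdivlMr ?normr_gt0 // mulrC -normrZ.
exact: (ler_opnorm aT_bl y1).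
Qed.

Lemma opnormD T T' : bounded_linear T -> bounded_linear T' ->
  opnorm (T + T') <= opnorm T + opnorm T'.
Proof.
move=> T_bl T'_bl; apply: opnorm_le; first exact: bounded_linear_add.
move=> y y1; change (`|T y + T' y| <= opnorm T + opnorm T').
by apply: le_trans (ler_normD _ _) _; apply: lerD; apply: ler_opnorm.
Qed.

Lemma bounded_linear_seminormed :
  seminormed_subspace (@bounded_linear R Y X) (@opnorm R Y X).
Proof.
by split; [exact: bounded_linear_cst0 | exact: bounded_linear_add |
  exact: bounded_linear_scale | exact: opnormZ | exact: opnormD].
Qed.

Lemma bounded_linearB T T' : bounded_linear T -> bounded_linear T' ->
  bounded_linear (T - T').
Proof.
by move=> T_bl T'_bl; rewrite -scaleN1r; apply/bounded_linear_add/bounded_linear_scale.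
Qed.

Lemma exists_norming_points (d : R) : 0 < d -> exists yu : (Y -> X) -> Y,
  forall u, bounded_linear u -> opnorm u = 1 -> `|yu u| <= 1 /\ 1 - d < `|u (yu u)|.
Proof.
move=> d0; have /choice [yu yuE] : forall u : Y -> X, exists y : Y,
    bounded_linear u -> opnorm u = 1 -> `|y| <= 1 /\ 1 - d < `|u y|.
  move=> u; have [u_bl|] := pselect (bounded_linear u); last by exists 0.
  have [y y1 uy] := opnorm_sup_adherent u_bl d0.
  by exists y => _ u1; split; rewrite // -u1.
by exists yu.
Qed.

(* Testing [T + mu S] at a point [y] where [u] almost attains its norm: the
   c0-inequality at [u y] survives the perturbation [T - u]. *)
Lemma opnorm_octahedral_step (T u S : Y -> X) (y : Y) (mu d : R) :
  bounded_linear T -> bounded_linear u -> bounded_linear S -> d <= 1 ->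
  opnorm (T - u) < d -> opnorm u = 1 -> `|y| <= 1 -> 1 - d < `|u y| ->
  `|y| <= `|S y| ->
  (1 - d) * (`|u y| + `|mu *: S y|) < `|u y + mu *: S y| ->
  (1 - d) * (1 - d) * (1 + `|mu|) - d <= opnorm (T + mu *: S).
Proof.
move=> T_bl u_bl S_bl d1 Tu_d u1 y1 uy_big yS c0_ineq.
have TuS_bl : bounded_linear (T + mu *: S).
  by apply/bounded_linear_add/bounded_linear_scale.
apply: le_trans (ler_opnorm TuS_bl y1).
have uy_le : `|u y| <= `|y| by rewrite -[leRHS]mul1r -u1 opnorm_bound.
have Tuy : `|T y - u y| <= d.
  apply: le_trans (opnorm_bound y (bounded_linearB T_bl u_bl)) _.
  rewrite -[leRHS]mulr1; apply: ler_pM => //; last exact: ltW.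
  exact/opnorm_ge0/bounded_linearB.
have muS : `|mu| * (1 - d) <= `|mu *: S y|.
  by rewrite normrZ ler_wpM2l //; lra.
have : (T + mu *: S) y = (u y + mu *: S y) + (T y - u y) by rewrite [RHS]addrC addrA subrK.
move=> ->; have := lerB_normD (u y + mu *: S y) (T y - u y).
have : (1 - d) * ((1 - d) + `|mu| * (1 - d)) <= (1 - d) * (`|u y| + `|mu *: S y|).
  by apply: ler_wpM2l; lra.
nra.
Qed.

End OperatorNorm.

Section C0Octahedral.
Variables (R : realType) (X : normedModType R).

Lemma normr_seminormed : seminormed_subspace (@setT X) (@normr R X).
Proof. by split => // [a x _|x y _ _]; [exact: normrZ | exact: ler_normD]. Qed.

Lemma normed_unit_sphere_finite_net (s : seq X) (d : R) : 0 < d ->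
  exists us : seq X, (forall u, u \in us -> span_of s u /\ `|u| = 1) /\
    forall z, span_of s z -> `|z| = 1 -> exists2 u, u \in us & `|z - u| < d.
Proof.
move=> d0; have [us [us_unit us_net]] :=
  unit_sphere_finite_net normr_seminormed (all_in_setT s) d0.
exists us; split => [u /us_unit [/span_ofE]|z /span_ofE] //; exact: us_net.
Qed.

Lemma c0_fd_condition_octahedral : c0_fd_condition X -> c0_octahedral X.
Proof.
move=> fdX xs xs_unit eps eps0; have [Y [Y_c0 YE]] := fdX xs eps eps0.
exists Y; split => // y Yy i.
have xi0 : xs`_i != 0 by rewrite -normr_eq0 xs_unit oner_eq0.
have := YE y xs`_i Yy (mem_span_of (mem_nth 0 (ltn_ord i))) (or_introl xi0).
by rewrite xs_unit.
Qed.

(* c0-octahedrality applied to a finite [eps/2]-net of the unit sphere. *)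
Lemma c0_octahedral_unit_sphere : c0_octahedral X -> forall (zs : seq X) (eps : R),
  0 < eps -> exists Y, c0_subspace Y /\ forall y z, Y y -> span_of zs z ->
    `|z| = 1 -> (1 - eps) * (1 + `|y|) < `|z + y|.
Proof.
move=> octX zs eps eps0; have e2 : 0 < eps / 2 by lra.
have [us [us_unit us_net]] := normed_unit_sphere_finite_net zs e2.
have us_unit' (i : 'I_(size us)) : `|us`_i| = 1.
  by have [] := us_unit _ (mem_nth 0 (ltn_ord i)).
have [Y [Y_c0 YE]] := octX us us_unit' _ e2.
exists Y; split => // y z Yy sz z1.
have [u uus zu] := us_net z sz z1.
have ui : (index u us < size us)%N by rewrite index_mem.
have := YE y Yy (Ordinal ui); rewrite /= nth_index // => uy.
have : `|u + y| <= `|z + y| + `|u - z|.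
  have -> : u + y = (z + y) + (u - z) by rewrite [RHS]addrC addrA subrK.
  exact: ler_normD.
by rewrite distrC; have := normr_ge0 y; nra.
Qed.

Lemma c0_octahedral_fd_condition : c0_octahedral X -> c0_fd_condition X.
Proof.
move=> octX zs eps eps0.
have [_ [[J [J_iso ->]] unitE]] := c0_octahedral_unit_sphere octX zs eps0.
exists (J @` @c0seq R); split => [|y z Yy sz yz_nz]; first by exists J.
have [z0|z_nz] := eqVneq z 0.
  have : 0 < `|y| by rewrite normr_gt0; case: yz_nz; rewrite ?z0 ?eqxx.
  by rewrite z0 normr0 !add0r; nra.
have t0 : 0 < `|z| by rewrite normr_gt0.
set t := `|z| in t0 *.
have zt1 : `|t^-1 *: z| = 1 by rewrite normrZ gtr0_norm ?invr_gt0 // mulVf ?gt_eqF.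
have := unitE _ _ (c0_subspaceZ J_iso t^-1 Yy) (span_ofZ t^-1 sz) zt1.
rewrite -scalerDr !normrZ gtr0_norm ?invr_gt0 // => ineq.
have -> : (1 - eps) * (t + `|y|) = t * ((1 - eps) * (1 + t^-1 * `|y|)).
  by field; rewrite gt_eqF.
by rewrite -[`|z + y|](mulVKf (lt0r_neq0 t0)) ltr_pM2l.
Qed.

End C0Octahedral.

Section NormingOperator.
Variables (R : realType) (Y X : normedModType R) (J : (nat -> R) -> X).
Hypothesis J_iso : c0_isometry J.

(* [S y] lists the values at [y] of norming functionals of the points of [ys],
   viewed in c_0 and carried into [X] by [J]. *)
Lemma exists_c0_norming_operator (ys : seq Y) : (exists2 y, y \in ys & `|y| = 1) ->
  exists S : Y -> X, [/\ bounded_linear S, opnorm S = 1,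
    forall y, y \in ys -> `|y| <= `|S y| & forall y, (J @` @c0seq R) (S y)].
Proof.
move=> [y1 y1ys y1_unit].
have /choice [g gE] := @exists_norming_functional R Y.
pose f y n := g ys`_n y.
pose S y := J (truncation (size ys) (f y)).
have f_le y n : (n < size ys)%N -> `|f y n| <= `|y|.
  by move=> _; have [_ + _] := gE ys`_n; apply.
have S_norm y : `|S y| = c0norm (truncation (size ys) (f y)).
  by rewrite J_iso.2 //; exact: c0seq_truncation.
have S_le y : `|S y| <= `|y| by rewrite S_norm; apply: c0norm_truncation_le (f_le y).
have S_ys y : y \in ys -> `|y| <= `|S y|.
  move=> yys; have i_lt : (index y ys < size ys)%N by rewrite index_mem.
  have := ler_c0norm_truncation (normr_ge0 y) (f_le y) i_lt.
  by rewrite -S_norm /f nth_index //; have [_ _ ->] := gE y; rewrite normr_id.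
have S_lin (a : R) u v : S (a *: u + v) = a *: S u + S v.
  rewrite -J_iso.1; try exact: c0seq_truncation.
  congr J; apply: funext => n; rewrite /truncation /f.
  by case: ifP => _; [have [-> _ _] := gE ys`_n | rewrite mulr0 addr0].
have S_bl : bounded_linear S by split => //; exists 1 => y; rewrite mul1r.
exists S; split => // [|y]; last first.
  by exists (truncation (size ys) (f y)); first exact: c0seq_truncation.
apply/eqP; rewrite eq_le opnorm_le // => [|y y_le1]; last exact: le_trans (S_le y) y_le1.
by rewrite -y1_unit (le_trans (S_ys _ y1ys)) // ler_opnorm // y1_unit.
Qed.

End NormingOperator.


Lemma c0_fd_condition_universally_octahedral (R : realType)
    (X : completeNormedModType R) :
  c0_fd_condition X -> universally_octahedral X.
Proof.
move=> fdX Y [y0 y0_nz] s s_bl eps eps0.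
pose d := Num.min eps 1 / 4.
have d0 : 0 < d by rewrite divr_gt0 // lt_min eps0 ltr01.
have d_le : d <= 1 / 4 by rewrite ler_pM2r // ge_min lexx orbT.
have d_eps : 4 * d <= eps by have := ge_min eps eps 1; rewrite lexx /d; lra.
have BL := @bounded_linear_seminormed R Y X.
have Ws : all_in (@bounded_linear R Y X) s := all_in_nth s_bl.
have [us [us_unit us_net]] := unit_sphere_finite_net BL Ws d0.
have [yu yuE] := exists_norming_points Y X d0.
have [_ [[J [J_iso ->]] fdE]] := fdX [seq u (yu u) | u <- us] d d0.
pose y1 := `|y0|^-1 *: y0.
have y1_unit : `|y1| = 1 by rewrite normrZ normfV normr_id mulVf ?normr_eq0.
have [S [S_bl S1 S_ge S_im]] := exists_c0_norming_operator J_iso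
  (ys := y1 :: [seq yu u | u <- us]) (ex_intro2 _ _ y1 (mem_head _ _) y1_unit).
exists S; split => //; split => // T lam /span_ofE; move: T lam.
apply: (octahedral_ineq_scale BL Ws S_bl S1 (ltW eps0)).
move=> T' mu sT' T'_unit.
have [u uus T'u] := us_net _ sT' T'_unit.
have [su u_unit] := us_unit _ uus.
have u_bl := lspan_in BL Ws su.
have [yu_le1 uyu] := yuE u u_bl u_unit.
have uyu_nz : u (yu u) != 0 by rewrite -normr_gt0; lra.
have d1 : d <= 1 by lra.
have yu_ys : yu u \in y1 :: [seq yu u | u <- us] by rewrite inE map_f ?orbT.
have := opnorm_octahedral_step (mu := mu) (lspan_in BL Ws sT') u_bl S_bl
  d1 T'u u_unit yu_le1 uyu (S_ge _ yu_ys)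
  (fdE _ _ (c0_subspaceZ J_iso mu (S_im _)) (mem_span_of (map_f _ uus)) (or_introl uyu_nz)).
apply: le_trans; have := normr_ge0 mu; nra.
Qed.

Theorem mainTheorem9 (R : realType) (X : completeNormedModType R) :
  (c0_octahedral X -> universally_octahedral X) /\
  (c0_octahedral X <-> c0_fd_condition X).
Proof.
split; first by move=> /c0_octahedral_fd_condition; exact: c0_fd_condition_universally_octahedral.
by split; [exact: c0_octahedral_fd_condition | exact: c0_fd_condition_octahedral].
Qed.
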